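(* Let $x_0\in\mathcal H$ and $a\in\mathbb R^m_+$, and assume that $\mathcal{LP}_w(F,F(x))\neq\emptyset$ for every $x\in\mathcal L(F,F(x_0)+a)$. Then for every $x\in\mathcal L(F,F(x_0)+a)$, $$\varphi(x)=\sup_{z\in\mathcal{LP}_w(F,F(x_0)+a)}\ \min_{i=1,\dots,m}\big(f_i(x)-f_i(z)\big).$$
   Context: $\mathcal H$ is a real Hilbert space with inner product $\langle\cdot,\cdot\rangle$ and norm $\|\cdot\|$. $f_1,\dots,f_m:\mathcal H\to\mathbb R$ are convex and continuously differentiable, and $F=(f_1,\dots,f_m)^\top$. A point $x^*\in\mathcal H$ is weak Pareto optimal if there is no $x\in\mathcal H$ with $f_i(x)<f_i(x^* )$ for all $i=1,\dots,m$; $\mathcal P_w$ denotes the set of weak Pareto optimal points. For $a\in\mathbb R^m$, $\mathcal L(F,a):=\{x\in\mathcal H: f_i(x)\le a_i \text{ for all } i\}$ and $\mathcal{LP}_w(F,a):=\mathcal L(F,a)\cap\mathcal P_w$. The merit function is $\varphi(x):=\sup_{z\in\mathcal H}\min_{i=1,\dots,m}(f_i(x)-f_i(z))$. *)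

From HB Require Import structures.
From mathcomp Require Import all_boot all_order all_algebra.
From mathcomp Require Import all_classical all_reals all_analysis.
Set Implicit Arguments. Unset Strict Implicit. Unset Printing Implicit Defensive.
Import Order.TTheory GRing.Theory Num.Theory.
Import numFieldNormedType.Exports.
Local Open Scope classical_set_scope.
Local Open Scope ring_scope.

(* A real Hilbert space is a complete normed space H over R whose norm comes
   from an inner product [ip]: symmetric, linear in the first argument, and
   with <x,x> = ||x||^2 (positive definiteness follows from the norm). *)
Definition is_inner_product (R : realType) (H : normedModType R)
    (ip : H -> H -> R) : Prop :=
  (forall x y, ip x y = ip y x) /\
  (forall (a : R) (x y z : H), ip (a *: x + y) z = a * ip x z + ip y z) /\
  (forall x, ip x x = `|x| ^+ 2).

Definition convex_fun (R : realType) (H : normedModType R) (f : H -> R) : Prop :=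
  forall (x y : H) (t : R), 0 <= t -> t <= 1 ->
    f (t *: x + (1 - t) *: y) <= t * f x + (1 - t) * f y.

(* Continuous (Fréchet) differentiability: f is differentiable at every point
   and its derivative is represented (Riesz) by a gradient map that is
   continuous from H to H. *)
Definition C1_fun (R : realType) (H : normedModType R) (ip : H -> H -> R)
    (f : H -> R^o) : Prop :=
  exists g : H -> H, continuous g /\
    forall x, differentiable f x /\ forall h, 'd f x h = ip (g x) h.

Definition sublevel (R : realType) (H : Type) (m : nat)
    (F : 'I_m -> H -> R) (a : 'I_m -> R) : set H :=
  [set x | forall i, F i x <= a i].

Definition weak_pareto (R : realType) (H : Type) (m : nat)
    (F : 'I_m -> H -> R) : set H :=
  [set xs | ~ exists x, forall i, F i x < F i xs].

Definition LPw (R : realType) (H : Type) (m : nat)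
    (F : 'I_m -> H -> R) (a : 'I_m -> R) : set H :=
  sublevel F a `&` weak_pareto F.

(* min_i (f_i(x) - f_i(z)), as an extended real (m >= 1 in use). *)
Definition minGap (R : realType) (H : Type) (m : nat)
    (F : 'I_m -> H -> R) (x z : H) : \bar R :=
  \big[Order.min/+oo%E]_(i < m) ((F i x - F i z)%:E).

Definition merit (R : realType) (H : Type) (m : nat)
    (F : 'I_m -> H -> R) (x : H) : \bar R :=
  ereal_sup [set minGap F x z | z in [set: H]].

From HB Require Import structures.
From mathcomp Require Import all_boot all_order all_algebra.
From mathcomp Require Import all_classical all_reals all_analysis.
Import Order.TTheory GRing.Theory Num.Theory.
Import numFieldNormedType.Exports.
Local Open Scope classical_set_scope.
Local Open Scope ring_scope.

(* A point z with f_i(z) > f_i(x) for some i gives a nonpositive gap, which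
   z := x already attains; otherwise z lies in L(F,F(x)). Any z in L(F,F(x))
   is in turn dominated by a weak Pareto point of L(F,F(z)), and decreasing
   every f_i only increases the gap. *)

Section MinGap.
Variables (R : realType) (H : Type) (m : nat) (F : 'I_m -> H -> R).

Lemma minGap_le_gap (x z : H) (i : 'I_m) :
  (minGap F x z <= (F i x - F i z)%:E)%E.
Proof. exact: bigmin_le. Qed.

Lemma minGap_ge0_self (x : H) : (0 <= minGap F x x)%E.
Proof. by apply: le_bigmin => [|i _]; rewrite ?leey ?subrr. Qed.

Lemma minGap_le_dominated (x z w : H) :
  (forall i, F i w <= F i z) -> (minGap F x z <= minGap F x w)%E.
Proof.
move=> hwz; apply: le_bigmin => [|i _]; first exact: leey.
by apply: le_trans (minGap_le_gap x z i) _; rewrite lee_fin lerD2l lerN2.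
Qed.

Lemma minGap_le_sublevel (x z : H) :
  exists2 w, sublevel F (F^~ x) w & (minGap F x z <= minGap F x w)%E.
Proof.
have [hz|] := pselect (forall i, F i z <= F i x); first by exists z.
move=> /existsNP[i /negP]; rewrite -ltNge => hxz.
exists x => [j|]; first exact: lexx.
apply: le_trans (minGap_le_gap x z i) (le_trans _ (minGap_ge0_self x)).
by rewrite lee_fin subr_le0 ltW.
Qed.

Lemma merit_restrict (x : H) (A : set H) :
  (forall w, sublevel F (F^~ x) w -> exists2 z, A z & forall i, F i z <= F i w) ->
  merit F x = ereal_sup [set minGap F x z | z in A].
Proof.
move=> hA; apply/eqP; rewrite eq_le; apply/andP; split.
- apply: ge_ereal_sup => _ [z _ <-].
  have [w hw hzw] := minGap_le_sublevel x z.
  have [z' hz' hz'w] := hA w hw.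
  apply: (le_trans hzw); apply: (le_trans (minGap_le_dominated x w z' hz'w)).
  by apply: ereal_sup_ubound; exists z'.
- by apply: ereal_sup_le => _ [z _ <-]; exists z.
Qed.

End MinGap.

Theorem mainTheorem1 (R : realType) (H : completeNormedModType R)
    (ip : H -> H -> R) (m : nat) (F : 'I_m -> H -> R^o)
    (hip : is_inner_product ip) (hm : (0 < m)%N)
    (hconv : forall i, convex_fun (F i)) (hC1 : forall i, C1_fun ip (F i))
    (x0 : H) (a : 'I_m -> R) (ha : forall i, 0 <= a i)
    (hne : forall x, sublevel F (fun i => F i x0 + a i) x ->
             LPw F (fun i => F i x) !=set0) :
  forall x, sublevel F (fun i => F i x0 + a i) x ->
    merit F x =
    ereal_sup [set minGap F x z | z in LPw F (fun i => F i x0 + a i)].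
Proof.
move=> x hx; apply: merit_restrict => w hw.
have hwL : sublevel F (fun i => F i x0 + a i) w.
  by move=> i; apply: le_trans (hw i) (hx i).
have [z [hzw hzP]] := hne w hwL.
exists z => //; split => // i.
exact: le_trans (hzw i) (hwL i).
Qed.
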